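(* Let $\mathcal{P}$ be a set of mutually commuting Pauli operators on $n$ qubits, and let $r$ be the number of independent generators of $\mathcal{P}$. Run the qubitwise diagonalization algorithm described in the context on $\mathcal{P}$, choosing at every stage $\alpha$ a nonzero null vector of the stage tableau of symplectic weight at most $\lfloor r^{(\alpha)}/2\rfloor+1$ (such a vector always exists, e.g. one of minimum weight). Then the total number of CNOT gate conjugations in the resulting diagonalizing circuit is at most $n\lfloor r/2\rfloor-\lfloor r/2\rfloor^2$.
   Context: A Pauli operator on $m$ qubits is encoded, up to phase, by $u=(\boldsymbol{x},\boldsymbol{z})\in\mathbb{F}_2^{2m}$ via $P=\bigotimes_{j=1}^m X^{x_j}Z^{z_j}$. For a set of Pauli operators, the tableau $(\mathcal{X}\mid\mathcal{Z})$ is the binary matrix whose rows encode the operators; the number of independent generators is its $\mathbb{F}_2$-rank. An operator is diagonal on qubit $j$ if its $j$-th tensor factor is $I$ or $Z$. The symplectic weight of $(\boldsymbol{v},\boldsymbol{w})\in\mathbb{F}_2^{2m}$ is $\omega(\boldsymbol{v},\boldsymbol{w})=|\{j: (v_j,w_j)\neq(0,0)\}|$. Qubitwise diagonalization algorithm. Input: a set of mutually commuting Pauli operators on $n$ qubits. At stage $\alpha$: discard the qubits on which all operators are already diagonal; let $n^{(\alpha)}$ be the number of remaining qubits (stop if $n^{(\alpha)}=0$); let $T^{(\alpha)}$ be an independent generating set of the operators restricted to the remaining qubits, of size $r^{(\alpha)}$, and let $M^{(\alpha)}=(\mathcal{X}^{(\alpha)}\mid\mathcal{Z}^{(\alpha)})$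 be its $r^{(\alpha)}\times 2n^{(\alpha)}$ tableau. Choose a nonzero $(\boldsymbol{v},\boldsymbol{w})$ with $M^{(\alpha)}(\boldsymbol{v};\boldsymbol{w})=0$ over $\mathbb{F}_2$, and a qubit $i$ with $(v_i,w_i)\neq(0,0)$. Step 1: for each qubit $j$, if $v_j=0,w_j=1$ conjugate by $\mathrm{H}(j)$; if $v_j=w_j=1$ conjugate by $\mathrm{S}(j)$ then $\mathrm{H}(j)$. Step 2: for each $j\neq i$ with $(v_j,w_j)\neq(0,0)$, conjugate by $\mathrm{CNOT}(j,i)$. After this all operators are diagonal on qubit $i$; then proceed to stage $\alpha+1$. The output circuit is the composition of all gates used. *)

(* Pauli operators (up to phase) on n qubits are rows of a
   binary tableau (X | Z) over 'F_2; a finite set of k operators is a pair of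
   k x n matrices X, Z (row p = operator p). *)
From HB Require Import structures.
From mathcomp Require Import all_boot all_order all_algebra.
Set Implicit Arguments. Unset Strict Implicit. Unset Printing Implicit Defensive.
Import GRing.Theory.
Local Open Scope ring_scope.

Definition tab (k n : nat) := ('M['F_2]_(k, n) * 'M['F_2]_(k, n))%type.

Definition tableau k n (t : tab k n) : 'M['F_2]_(k, n + n) := row_mx t.1 t.2.

Definition commuting k n (t : tab k n) : Prop :=
  forall p q : 'I_k,
    \sum_(j < n) (t.1 p j * t.2 q j + t.2 p j * t.1 q j) = 0.

(* Qubits on which some operator is NOT diagonal (tensor factor X or Y). *)
Definition remaining k n (t : tab k n) : {set 'I_n} :=
  [set j | [exists p, t.1 p j != 0]].

(* The enumeration of the remaining qubits: stage qubit a |-> original qubit. *)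
Definition rem_idx k n (t : tab k n) : 'I_#|remaining t| -> 'I_n :=
  fun a => enum_val a.

Definition restricted k n (t : tab k n) : 'M['F_2]_(k, #|remaining t| + #|remaining t|) :=
  row_mx (colsub (@rem_idx k n t) t.1) (colsub (@rem_idx k n t) t.2).

(* Conjugation by single gates, acting on the binary tableau (phases dropped). *)
Definition gateH k n (j : 'I_n) (t : tab k n) : tab k n :=
  (\matrix_(p, q) (if q == j then t.2 p q else t.1 p q),
   \matrix_(p, q) (if q == j then t.1 p q else t.2 p q)).

Definition gateS k n (j : 'I_n) (t : tab k n) : tab k n :=
  (t.1, \matrix_(p, q) (if q == j then t.2 p q + t.1 p q else t.2 p q)).

(* CNOT(c, tg): X_c -> X_c X_tg, Z_tg -> Z_c Z_tg. *)
Definition gateCNOT k n (c tg : 'I_n) (t : tab k n) : tab k n :=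
  (\matrix_(p, q) (if q == tg then t.1 p tg + t.1 p c else t.1 p q),
   \matrix_(p, q) (if q == c then t.2 p c + t.2 p tg else t.2 p q)).

Definition sweight m (v w : 'rV['F_2]_m) : nat :=
  #|[set j : 'I_m | (v 0 j != 0) || (w 0 j != 0)]|.

(* Step 1 on one qubit j (original index), given (v_j, w_j). *)
Definition step1_qubit k n (a b : 'F_2) (j : 'I_n) (t : tab k n) : tab k n :=
  if (a == 0) && (b == 1) then gateH j t
  else if (a == 1) && (b == 1) then gateH j (gateS j t)
  else t.

(* One full stage (Step 1 then Step 2), for a null vector (v,w) on the
   remaining qubits and a chosen qubit i. *)
Definition apply_stage k n (t : tab k n)
    (v w : 'rV['F_2]_#|remaining t|) (i : 'I_#|remaining t|) : tab k n :=
  let f := @rem_idx k n t in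
  let t1 := foldr (fun a s => step1_qubit (v 0 a) (w 0 a) (f a) s) t
                  (enum 'I_#|remaining t|) in
  foldr (fun a s => gateCNOT (f a) (f i) s) t1
        [seq a <- enum 'I_#|remaining t| | (a != i) && ((v 0 a != 0) || (w 0 a != 0))].

Definition stage_cnots m (v w : 'rV['F_2]_m) (i : 'I_m) : nat :=
  #|[set a : 'I_m | (a != i) && ((v 0 a != 0) || (w 0 a != 0))]|.

(* A legal stage of the algorithm with the weight constraint of theorem 2:
   T is an independent generating set (row-free, same row space) of the
   restricted operators, of size s = r^(alpha); (v,w) is a nonzero null vector
   of T with weight <= floor(s/2)+1; i lies in its support. *)
Definition stage k n (t t' : tab k n) (c : nat) : Prop :=
  exists (s : nat) (T : 'M['F_2]_(s, #|remaining t| + #|remaining t|))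
         (v w : 'rV['F_2]_#|remaining t|) (i : 'I_#|remaining t|),
    [/\ row_free T, (T == restricted t)%MS,
        row_mx v w != 0, T *m (row_mx v w)^T = 0 &
    [/\ (sweight v w <= s./2 + 1)%N,
        (v 0 i != 0) || (w 0 i != 0),
        t' = apply_stage v w i &
        c = stage_cnots v w i]].

Inductive run k n : tab k n -> nat -> Prop :=
| run_stop (t : tab k n) : remaining t = set0 -> run t 0
| run_step (t t' : tab k n) (c c' : nat) :
    remaining t != set0 -> stage t t' c -> run t' c' -> run t (c + c')%N.

From mathcomp Require Import all_boot all_order all_algebra.
From mathcomp Require Import ring zify.
Set Implicit Arguments. Unset Strict Implicit. Unset Printing Implicit Defensive.
Import GRing.Theory.
Local Open Scope ring_scope.

(* A stage whose null vector has weight w uses w - 1 CNOTs, hence at most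
   floor(s/2), where s is the rank of the stage tableau.  Gates act linearly on
   the columns of the tableau, so every linear relation among the operators
   survives and s <= r; the restricted operators still commute, so their
   tableau spans an isotropic subspace and s <= m, the number of remaining
   qubits.  A stage makes its pivot qubit diagonal without touching the X part
   of the qubits that are already diagonal, so m drops by at least one.
   Summing min(floor(r/2), floor(m/2)) over m = n, ..., 1 gives
   n floor(r/2) - floor(r/2)^2, as 2 floor(r/2) <= r <= n. *)

Lemma mulmx_row_eq0P (R : pzRingType) k m (u : 'rV[R]_k) (M : 'M[R]_(k, m)) :
  u *m M = 0 <-> forall q, \sum_p u 0 p * M p q = 0.
Proof.
split=> [uM0 q|uM0]; last by apply/rowP => q; rewrite !mxE uM0.
by have := congr1 (fun N : 'rV_m => N 0 q) uM0; rewrite !mxE.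
Qed.

Section Rank.
Variable F : fieldType.

Lemma leq_mxrank_ker k m1 m2 (A : 'M[F]_(k, m1)) (B : 'M[F]_(k, m2)) :
  (forall u : 'rV_k, u *m A = 0 -> u *m B = 0) -> (\rank B <= \rank A)%N.
Proof.
move=> kerAB; have /mulmx0_rank_max : kermx A *m B = 0.
  by apply/row_matrixP => i; rewrite row_mul row0 kerAB // -row_mul mulmx_ker row0.
by rewrite mxrank_ker; have := rank_leq_row A; lia.
Qed.

Lemma mxrank_isotropic k m (X Z : 'M[F]_(k, m)) :
  X *m Z^T + Z *m X^T = 0 -> (\rank (row_mx X Z) <= m)%N.
Proof.
move=> iso; have /mulmx0_rank_max : row_mx Z X *m (row_mx X Z)^T = 0.
  by rewrite tr_row_mx mul_row_col addrC.
have : (\rank (row_mx X Z) <= \rank (row_mx Z X))%N.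
  apply: leq_mxrank_ker => u; rewrite !mul_mx_row => /eqP.
  by rewrite row_mx_eq0 => /andP[/eqP -> /eqP ->]; rewrite row_mx0.
by rewrite mxrank_tr; lia.
Qed.

End Rank.

Lemma F2_cases (x : 'F_2) : x = 0 \/ x = 1.
Proof. by case: x => [[|[|//]] ?]; [left|right]; apply/val_inj. Qed.

Lemma F2_addrr (x : 'F_2) : x + x = 0.
Proof. exact: (addrr_pchar2 (pchar_Fp _)). Qed.

Lemma commuting_mx k n (t : tab k n) :
  commuting t <-> t.1 *m t.2^T + t.2 *m t.1^T = 0.
Proof.
have entry p q : (t.1 *m t.2^T + t.2 *m t.1^T) p q =
    \sum_j (t.1 p j * t.2 q j + t.2 p j * t.1 q j).
  by rewrite !mxE big_split; congr (_ + _); apply: eq_bigr => j _; rewrite mxE.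
split=> [comm_t | /matrixP comm_t p q].
  by apply/matrixP => p q; rewrite entry comm_t mxE.
by rewrite -entry comm_t mxE.
Qed.

Lemma mxrank_commuting k n (t : tab k n) :
  commuting t -> (\rank (tableau t) <= n)%N.
Proof. by move/commuting_mx; apply: mxrank_isotropic. Qed.

Definition keeps_relations k n (t t' : tab k n) :=
  forall u : 'rV['F_2]_k, u *m tableau t = 0 -> u *m tableau t' = 0.

Lemma mul_tableau_eq0 k n (u : 'rV['F_2]_k) (t : tab k n) :
  u *m tableau t = 0 <-> u *m t.1 = 0 /\ u *m t.2 = 0.
Proof.
rewrite /tableau mul_mx_row; split=> [/eqP|[-> ->]]; last by rewrite row_mx0.
by rewrite row_mx_eq0 => /andP[/eqP -> /eqP ->].
Qed.

Lemma keeps_relationsP k n (t t' : tab k n) :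
  (forall u : 'rV_k,
     (forall q, \sum_p u 0 p * t.1 p q = 0) ->
     (forall q, \sum_p u 0 p * t.2 p q = 0) ->
     (forall q, \sum_p u 0 p * t'.1 p q = 0) /\
     (forall q, \sum_p u 0 p * t'.2 p q = 0)) ->
  keeps_relations t t'.
Proof.
move=> cols u /mul_tableau_eq0[/mulmx_row_eq0P u1 /mulmx_row_eq0P u2].
have [u1' u2'] := cols u u1 u2.
by apply/mul_tableau_eq0; split; apply/mulmx_row_eq0P.
Qed.

Lemma keeps_relations_trans k n (t1 t2 t3 : tab k n) :
  keeps_relations t1 t2 -> keeps_relations t2 t3 -> keeps_relations t1 t3.
Proof. by move=> rel12 rel23 u /rel12 /rel23. Qed.

Lemma mxrank_keeps_relations k n (t t' : tab k n) :
  keeps_relations t t' -> (\rank (tableau t') <= \rank (tableau t))%N.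
Proof. exact: leq_mxrank_ker. Qed.

Section Gates.
Variables (k n : nat) (t : tab k n).

Lemma keeps_relations_H j : keeps_relations t (gateH j t).
Proof.
apply: keeps_relationsP => u u1 u2; split=> q /=; under eq_bigr do rewrite mxE.
  by case: (q == j); [apply: u2 | apply: u1].
by case: (q == j); [apply: u1 | apply: u2].
Qed.

Lemma keeps_relations_S j : keeps_relations t (gateS j t).
Proof.
apply: keeps_relationsP => u u1 u2; split=> // q /=; under eq_bigr do rewrite mxE.
case: (q == j); last exact: u2.
by under eq_bigr do rewrite mulrDr; rewrite big_split /= u1 u2 addr0.
Qed.

Lemma keeps_relations_CNOT c tg : keeps_relations t (gateCNOT c tg t).
Proof.
apply: keeps_relationsP => u u1 u2; split=> q /=; under eq_bigr do rewrite mxE.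
  case: (q == tg); last exact: u1.
  by under eq_bigr do rewrite mulrDr; rewrite big_split /= !u1 addr0.
case: (q == c); last exact: u2.
by under eq_bigr do rewrite mulrDr; rewrite big_split /= !u2 addr0.
Qed.

Hypothesis comm_t : commuting t.

Lemma commuting_H j : commuting (gateH j t).
Proof.
move=> p q; rewrite -[RHS](comm_t p q); apply: eq_bigr => i _ /=; rewrite !mxE.
by case: (i == j); rewrite // addrC.
Qed.

Lemma commuting_S j : commuting (gateS j t).
Proof.
move=> p q; rewrite -[RHS](comm_t p q); apply: eq_bigr => i _ /=; rewrite !mxE.
by case: (i == j); rewrite // mulrDr mulrDl addrACA F2_addrr addr0.
Qed.

(* CNOT changes the summands at c and tg by the same amount d, which cancels
   in F_2. *)
Lemma commuting_CNOT c tg : c != tg -> commuting (gateCNOT c tg t).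
Proof.
move=> c_tg p q; set d := t.1 p c * t.2 q tg + t.2 p tg * t.1 q c.
rewrite -[RHS](comm_t p q).
transitivity (\sum_i ((t.1 p i * t.2 q i + t.2 p i * t.1 q i)
   + ((if i == c then d else 0) + (if i == tg then d else 0)))).
  apply: eq_bigr => i _ /=; rewrite !mxE.
  have [->|i_tg] := eqVneq i tg.
    by rewrite eq_sym (negbTE c_tg) add0r /d; ring.
  have [->|i_c] := eqVneq i c; first by rewrite addr0 /d; ring.
  by rewrite !addr0.
have pick (x : 'I_n) : \sum_i (if i == x then d else 0) = d.
  by rewrite -big_mkcond big_pred1_eq.
by rewrite big_split /= [X in _ + X]big_split /= !pick F2_addrr addr0.
Qed.

End Gates.

Lemma keeps_relations_step1 k n a b j (t : tab k n) :
  keeps_relations t (step1_qubit a b j t).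
Proof.
rewrite /step1_qubit; case: ifP => _; first exact: keeps_relations_H.
case: ifP => _ //; apply: keeps_relations_trans (keeps_relations_S j) _.
exact: keeps_relations_H.
Qed.

Lemma commuting_step1 k n a b j (t : tab k n) :
  commuting t -> commuting (step1_qubit a b j t).
Proof.
move=> comm_t; rewrite /step1_qubit; case: ifP => _; first exact: commuting_H.
by case: ifP => _ //; apply/commuting_H/commuting_S.
Qed.

Definition restrict k n (t : tab k n) : tab k #|remaining t| :=
  (colsub (@rem_idx k n t) t.1, colsub (@rem_idx k n t) t.2).

Lemma mxrank_restricted k n (t : tab k n) :
  (\rank (restricted t) <= \rank (tableau t))%N.
Proof.
apply: leq_mxrank_ker => u /mul_tableau_eq0[u1 u2].
by apply/(mul_tableau_eq0 _ (restrict t)); rewrite /= !mulmx_colsub u1 u2 mxsub_const.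
Qed.

Lemma commuting_restrict k n (t : tab k n) : commuting t -> commuting (restrict t).
Proof.
move=> comm_t p q; rewrite -[RHS](comm_t p q) [RHS](bigID (mem (remaining t))) /=.
rewrite [X in _ = _ + X]big1 ?addr0 => [|j]; last first.
  rewrite inE negb_exists => /forallP X0.
  by rewrite !(eqP (negbNE (X0 _))) mulr0 mul0r addr0.
by rewrite [RHS]big_enum_val; apply: eq_bigr => a _; rewrite !mxE.
Qed.

Lemma step1_qubit_other k n a b (j q : 'I_n) (t : tab k n) p : q != j ->
  (step1_qubit a b j t).1 p q = t.1 p q /\ (step1_qubit a b j t).2 p q = t.2 p q.
Proof.
move=> /negbTE q_j; rewrite /step1_qubit.
by case: ifP => _; [|case: ifP => _]; rewrite //= !mxE q_j // mxE q_j.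
Qed.

Lemma step1_qubit_X k n (a b : 'F_2) (j : 'I_n) (t : tab k n) p :
  (a != 0) || (b != 0) -> (step1_qubit a b j t).1 p j = a * t.1 p j + b * t.2 p j.
Proof.
rewrite /step1_qubit; case: (F2_cases a) => ->; case: (F2_cases b) => -> //= _;
by rewrite ?eqxx ?oner_eq0 /= ?mxE ?eqxx ?mxE ?eqxx ?mul0r ?mul1r ?add0r ?addr0 // addrC.
Qed.

Section StageSequences.
Variables (k n m : nat) (g : 'I_m -> 'I_n) (v w : 'rV['F_2]_m).
Hypothesis g_inj : injective g.

Definition step1_seq (t : tab k n) (l : seq 'I_m) :=
  foldr (fun a s => step1_qubit (v 0 a) (w 0 a) (g a) s) t l.

Lemma step1_seq_other t l p q : q \notin map g l ->
  (step1_seq t l).1 p q = t.1 p q /\ (step1_seq t l).2 p q = t.2 p q.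
Proof.
elim: l => [|a l IH] //=; rewrite in_cons negb_or => /andP[q_a /IH[<- <-]].
exact: step1_qubit_other.
Qed.

Lemma step1_seq_X t l a p :
  uniq l -> a \in l -> (v 0 a != 0) || (w 0 a != 0) ->
  (step1_seq t l).1 p (g a) = v 0 a * t.1 p (g a) + w 0 a * t.2 p (g a).
Proof.
elim: l => [|b l IH] //= /andP[b_l uniq_l].
rewrite in_cons => /orP[/eqP ->|a_l] supp_a.
  have b_out : g b \notin map g l by rewrite mem_map.
  by have [<- <-] := step1_seq_other t p b_out; apply: step1_qubit_X.
have a_b : g a != g b by rewrite (inj_eq g_inj); apply: contraNneq b_l => <-.
by have [-> _] := step1_qubit_other (v 0 b) (w 0 b) (step1_seq t l) p a_b; apply: IH.
Qed.

Lemma keeps_relations_step1_seq t l : keeps_relations t (step1_seq t l).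
Proof.
elim: l => [|a l IH] //=; apply: keeps_relations_trans IH _.
exact: keeps_relations_step1.
Qed.

Lemma commuting_step1_seq t l : commuting t -> commuting (step1_seq t l).
Proof. by move=> comm_t; elim: l => [|a l IH] //=; apply: commuting_step1. Qed.

Variable i : 'I_m.

Definition step2_seq (t : tab k n) (L : seq 'I_m) :=
  foldr (fun a s => gateCNOT (g a) (g i) s) t L.

Lemma step2_seq_X t L p q : i \notin L ->
  (step2_seq t L).1 p q =
    if q == g i then t.1 p (g i) + \sum_(a <- L) t.1 p (g a) else t.1 p q.
Proof.
elim: L q => [|a L IH] q /=; first by rewrite big_nil addr0; case: eqP => [->|].
rewrite in_cons negb_or => /andP[i_a i_L]; rewrite mxE.
case: ifP => [_|q_i]; last by rewrite IH // q_i.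
have a_i : g a != g i by rewrite (inj_eq g_inj) eq_sym.
by rewrite !IH // eqxx (negbTE a_i) big_cons -addrA [t.1 p (g a) + _]addrC.
Qed.

Lemma keeps_relations_step2_seq t L : keeps_relations t (step2_seq t L).
Proof.
elim: L => [|a L IH] //=; apply: keeps_relations_trans IH _.
exact: keeps_relations_CNOT.
Qed.

Lemma commuting_step2_seq t L :
  i \notin L -> commuting t -> commuting (step2_seq t L).
Proof.
move=> + comm_t; elim: L => [|a L IH] //=.
rewrite in_cons negb_or => /andP[i_a i_L].
apply: commuting_CNOT; first exact: IH.
by apply: contraNneq i_a => /g_inj ->.
Qed.

End StageSequences.

Section Stage.
Variables (k n : nat) (t : tab k n).
Local Notation m := #|remaining t|.
Local Notation f := (@rem_idx k n t).
Variables (v w : 'rV['F_2]_m) (i : 'I_m).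
Hypothesis supp_i : (v 0 i != 0) || (w 0 i != 0).

Let step1 := step1_seq f v w t (enum 'I_m).
Let cnot_controls :=
  [seq a <- enum 'I_m | (a != i) && ((v 0 a != 0) || (w 0 a != 0))].

Let apply_stageE : apply_stage v w i = step2_seq f i step1 cnot_controls.
Proof. by []. Qed.

Let f_inj : injective f.
Proof. exact: enum_val_inj. Qed.

Let pivot_notin_controls : i \notin cnot_controls.
Proof. by rewrite mem_filter eqxx. Qed.

(* Step 1 turns the X column of each support qubit a into v_a X_a + w_a Z_a,
   and Step 2 adds all these columns into the pivot column. *)
Lemma apply_stage_X_pivot p :
  (apply_stage v w i).1 p (f i) = (restricted t *m (row_mx v w)^T) p 0.
Proof.
set G := fun a => v 0 a * t.1 p (f a) + w 0 a * t.2 p (f a).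
have step1_X a : (v 0 a != 0) || (w 0 a != 0) -> step1.1 p (f a) = G a.
  by move=> supp_a; apply: step1_seq_X; rewrite ?enum_uniq ?mem_enum.
have G0 a : ~~ ((v 0 a != 0) || (w 0 a != 0)) -> G a = 0.
  by rewrite /G negb_or !negbK => /andP[/eqP-> /eqP->]; rewrite !mul0r addr0.
transitivity (\sum_a G a).
  rewrite apply_stageE (step2_seq_X f_inj) // eqxx step1_X //.
  rewrite big_filter big_enum_cond /= (eq_bigr G) => [|a /andP[_ /step1_X //]].
  rewrite [RHS](bigD1 i) //=; congr (_ + _).
  rewrite [RHS](bigID (fun a => (v 0 a != 0) || (w 0 a != 0))) /=.
  by rewrite [X in _ = _ + X]big1 ?addr0 // => a /andP[_ /G0].
rewrite tr_row_mx mul_row_col !mxE -big_split /=; apply: eq_bigr => a _.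
by rewrite !mxE /G mulrC [w 0 a * _]mulrC.
Qed.

Lemma apply_stage_X_other p q :
  q \notin remaining t -> (apply_stage v w i).1 p q = t.1 p q.
Proof.
move=> q_rem; have q_f a : q != f a by apply: contraNneq q_rem => ->; apply: enum_valP.
rewrite apply_stageE (step2_seq_X f_inj) // (negbTE (q_f i)).
by apply: (step1_seq_other _ _ _ _ _).1; apply/mapP => -[a _ /eqP]; apply/negP.
Qed.

Lemma remaining_apply_stage : restricted t *m (row_mx v w)^T = 0 ->
  remaining (apply_stage v w i) \subset remaining t :\ f i.
Proof.
move=> null_vw; apply/subsetP => q; rewrite inE => /existsP[p X_pq].
rewrite in_setD1; apply/andP; split.
  by apply: contraNneq X_pq => ->; rewrite apply_stage_X_pivot null_vw mxE.
apply: contraNT X_pq => q_rem; rewrite apply_stage_X_other //.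
by move: q_rem; rewrite inE negb_exists => /forallP/(_ p); rewrite negbK.
Qed.

Lemma keeps_relations_apply_stage : keeps_relations t (apply_stage v w i).
Proof.
rewrite apply_stageE; apply: (keeps_relations_trans (t2 := step1)).
  exact: keeps_relations_step1_seq.
exact: keeps_relations_step2_seq.
Qed.

Lemma commuting_apply_stage : commuting t -> commuting (apply_stage v w i).
Proof.
move=> comm_t; rewrite apply_stageE; apply: commuting_step2_seq => //.
exact: commuting_step1_seq.
Qed.

Lemma sweight_stage_cnots : sweight v w = (stage_cnots v w i).+1.
Proof.
rewrite /sweight /stage_cnots (cardsD1 i) inE supp_i add1n; congr (_.+1).
by apply: eq_card => a; rewrite !inE.
Qed.

End Stage.

Lemma stage_spec k n (t t' : tab k n) c : commuting t -> stage t t' c ->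
  [/\ commuting t', keeps_relations t t', (#|remaining t'| < #|remaining t|)%N
    & (c <= (\rank (restricted t))./2)%N].
Proof.
move=> comm_t [s [T [v [w [i [free_T eq_T _ null_T [weight_vw supp_i -> ->]]]]]]].
have null_vw : restricted t *m (row_mx v w)^T = 0.
  have /submxP[D ->] : (restricted t <= T)%MS by case/andP: eq_T.
  by rewrite -mulmxA null_T mulmx0.
split.
- exact: commuting_apply_stage.
- exact: keeps_relations_apply_stage.
- apply: leq_ltn_trans (subset_leq_card (remaining_apply_stage supp_i null_vw)) _.
  by rewrite [X in (_ < X)%N](cardsD1 (rem_idx i)) enum_valP.
- have rank_T : \rank (restricted t) = s by rewrite -(eqmx_rank eq_T) (eqP free_T).
  by move: weight_vw; rewrite (sweight_stage_cnots supp_i) rank_T addn1 ltnS.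
Qed.

Local Close Scope ring_scope.

Definition cnot_budget h m := \sum_(j < m.+1) minn h j./2.

Lemma cnot_budgetS h m : cnot_budget h m.+1 = cnot_budget h m + minn h m.+1./2.
Proof. by rewrite /cnot_budget big_ord_recr. Qed.

Lemma cnot_budget_double h : cnot_budget h h.*2 = h ^ 2.
Proof.
have sum_half l : \sum_(j < l.*2.+1) j./2 = l ^ 2.
  elim: l => [|l IH]; first by rewrite big_ord1.
  by rewrite doubleS 2!big_ord_recr IH /=; lia.
rewrite -sum_half; apply: eq_bigr => j _; apply/minn_idPr.
by have := ltn_ord j; lia.
Qed.

Lemma cnot_budget_closed h m : h.*2 <= m -> cnot_budget h m = m * h - h ^ 2.
Proof.
elim: m => [|m IH].
  by rewrite leqn0 double_eq0 => /eqP->; rewrite /cnot_budget big_ord1.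
rewrite leq_eqVlt => /orP[/eqP <-|lt_2h_m]; first by rewrite cnot_budget_double; lia.
rewrite cnot_budgetS IH // (minn_idPl _); last by lia.
have : h ^ 2 <= m * h by rewrite expnS expn1 leq_mul2r; lia.
lia.
Qed.

Lemma run_cnots_le k n (t : tab k n) c h m : run t c -> commuting t ->
  (\rank (tableau t))./2 <= h -> #|remaining t| <= m -> c <= cnot_budget h m.
Proof.
move=> run_t; elim: run_t m => {t c} [t _ m|t t' c c' _ stage_t _ IH m];
  move=> comm_t rank_t rem_t; first exact: leq0n.
have [comm_t' rel_t' rem_t' cost_t] := stage_spec comm_t stage_t.
case: m rem_t => [|m] rem_t; first by move: rem_t' rem_t; lia.
rewrite cnot_budgetS [X in _ <= X]addnC leq_add //.
  apply: leq_trans cost_t _; rewrite leq_min; apply/andP; split.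
    exact: leq_trans (half_leq (mxrank_restricted t)) rank_t.
  exact: half_leq (leq_trans (mxrank_commuting (commuting_restrict comm_t)) rem_t).
apply: IH comm_t' _ _; last by move: rem_t' rem_t; lia.
exact: leq_trans (half_leq (mxrank_keeps_relations rel_t')) rank_t.
Qed.

Unset Implicit Arguments.

Theorem theorem2 (n k : nat) (X Z : 'M['F_2]_(k, n)) (c : nat) :
  commuting (X, Z) -> run (X, Z) c ->
  let r := \rank (tableau (X, Z)) in
  (c <= n * r./2 - r./2 ^ 2)%N.
Proof.
move=> comm_XZ run_XZ /=; set r := \rank (tableau (X, Z)).
have r_n : r <= n := mxrank_commuting comm_XZ.
rewrite -cnot_budget_closed; last by move: r_n; lia.
apply: run_cnots_le run_XZ comm_XZ (leqnn _) _.
by rewrite -[X in _ <= X]card_ord max_card.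
Qed.
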